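(* Let $m\ge 1$, let $t_1<\cdots<t_m$ be real, and let $\omega_0,\dots,\omega_m$ be real numbers with $\sum_{k=0}^{\ell}\omega_k\ge 0$ for $\ell=0,1,\dots,m$ and such that the weight $$w(x)={\rm e}^{-x^2}\Big(\omega_0+\sum_{k=1}^m\omega_k\,\theta(x-t_k)\Big),\qquad x\in\mathbb{R},$$ is not identically zero. Let $P_n$, $h_n$, $\alpha_n$, $\beta_n$, $R_{n,k}$, $r_{n,k}$ be as in the context. Then for every $n\ge 0$, $$\alpha_n=\frac12\sum_{k=1}^m R_{n,k},\qquad \beta_n=\frac12\Big(\sum_{k=1}^m r_{n,k}+n\Big).$$
   Context: $\theta(y)=1$ for $y>0$ and $\theta(y)=0$ otherwise. $P_n(z)$ ($n\ge0$) denotes the monic polynomial of degree $n$ orthogonal with respect to $w$ on $\mathbb{R}$: $\int_{\mathbb{R}}P_j(x)P_k(x)w(x)\,dx=h_k\delta_{jk}$ with $h_k>0$; $P_{-1}:=0$. They satisfy the three-term recurrence $zP_n(z)=P_{n+1}(z)+\alpha_nP_n(z)+\beta_nP_{n-1}(z)$ for $n\ge0$, with $\beta_0:=0$ and $\beta_n=h_n/h_{n-1}$ for $n\ge1$. For $k=1,\dots,m$: $R_{n,k}:=\omega_k{\rm e}^{-t_k^2}P_n(t_k)^2/h_n$ for $n\ge0$, and $r_{n,k}:=\omega_k{\rm e}^{-t_k^2}P_n(t_k)P_{n-1}(t_k)/h_{n-1}$ for $n\ge1$, with $r_{0,k}:=0$. *)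

From HB Require Import structures.
From mathcomp Require Import all_boot all_order all_algebra.
From mathcomp Require Import all_classical all_reals all_analysis.
Set Implicit Arguments. Unset Strict Implicit. Unset Printing Implicit Defensive.
Import Order.TTheory GRing.Theory Num.Theory.
Local Open Scope ring_scope.

Definition theta {R : realType} (y : R) : R := if 0 < y then 1 else 0.

(* w(x) = e^{-x^2} (omega_0 + sum_{k=1}^m omega_k theta(x - t_k));
   t and omega are indexed by nat, only t 1..t m and omega 0..omega m matter. *)
Definition weight {R : realType} (m : nat) (t om : nat -> R) (x : R) : R :=
  expR (- x ^+ 2) * (om 0%N + \sum_(1 <= k < m.+1) om k * theta (x - t k)).

Definition beta_of {R : realType} (h : nat -> R) (n : nat) : R :=
  if n is n'.+1 then h n / h n' else 0.

Definition Rnk {R : realType} (t om : nat -> R) (P : nat -> {poly R})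
  (h : nat -> R) (n k : nat) : R :=
  om k * expR (- t k ^+ 2) * (P n).[t k] ^+ 2 / h n.

Definition rnk {R : realType} (t om : nat -> R) (P : nat -> {poly R})
  (h : nat -> R) (n k : nat) : R :=
  if n is n'.+1 then om k * expR (- t k ^+ 2) * (P n).[t k] * (P n').[t k] / h n'
  else 0.

From HB Require Import structures.
From mathcomp Require Import all_boot all_order all_algebra.
From mathcomp Require Import all_classical all_reals all_analysis.
From mathcomp Require Import ring lra measurable_realfun.
Import Order.TTheory GRing.Theory Num.Theory.
Import numFieldNormedType.Exports.
Local Open Scope ring_scope.

(* Since (q e^{-x^2})' = -(2xq - q') e^{-x^2} and theta(x - t_k) restricts the
   integral to ]t_k, +oo[, every polynomial q satisfies
     int (2xq - q') w = sum_k omega_k e^{-t_k^2} q(t_k).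
   For q = P_n^2 the recurrence and orthogonality turn the left side into
   2 alpha_n h_n; for q = P_n P_{n-1} into 2 h_n - n h_{n-1}, because
   P_n' = n P_{n-1} + (lower degree). *)

Section integral_exhaustion.
Context {d : measure_display} {T : measurableType d} {R : realType}.
Variable mu : {measure set T -> \bar R}.
Local Open Scope classical_set_scope.

Lemma integral_cvg_exhaustion (D : set T) (I : (set T)^nat) (f : T -> R) :
  measurable D -> (forall n, measurable (I n)) -> (forall n, I n `<=` D) ->
  (forall x, D x -> \forall n \near \oo, I n x) ->
  mu.-integrable D (EFin \o f) ->
  (\int[mu]_(x in I n) (f x)%:E @[n --> \oo] --> \int[mu]_(x in D) (f x)%:E)%E.
Proof.
move=> mD mI ID DI intf.
set g := fun n => (EFin \o f) \_ (I n).
have gE n : (\int[mu]_(x in D) g n x = \int[mu]_(x in I n) (f x)%:E)%E.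
  by rewrite -integral_mkcondr setIidr.
under eq_fun do rewrite -gE.
apply: (dominated_cvg mD _ _ _ (integrable_abse intf)) => //.
- move=> n; rewrite /g; apply: (measurable_restrict (EFin \o f) (mI n) mD).1.
  exact: measurable_funS (measurable_int _ intf).
- move=> x Dx; apply: cvg_near_cst; apply: filterS (DI x Dx) => n Inx.
  by rewrite /g patchE mem_set.
- by move=> n x Dx; rewrite /g patchE; case: ifP; rewrite ?abse0 ?abse_ge0.
Qed.

End integral_exhaustion.

Section gauss_polynomial.
Context {R : realType}.
Local Notation mu := (@lebesgue_measure R).
Local Open Scope classical_set_scope.

Lemma horner_bound (p : {poly R}) :
  exists C N, 0 <= C /\ forall x, `|p.[x]| <= C * (1 + x ^+ 2) ^+ N.
Proof.
elim/poly_ind: p => [|p c [C [N [C0 pC]]]].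
  by exists 0, 0%N; split => // x; rewrite horner0 normr0 mul0r.
exists (C + `|c|), N.+1; split=> [|x]; first by rewrite addr_ge0.
have x_le : `|x| <= 1 + x ^+ 2.
  by rewrite -real_normK ?num_real //; have := normr_ge0 x; nra.
have ge1 : 1 <= (1 + x ^+ 2) ^+ N by rewrite exprn_ege1 // lerDl sqr_ge0.
rewrite hornerMXaddC (le_trans (ler_normD _ _)) // normrM exprS mulrDl.
apply: lerD; first by rewrite mulrCA mulrC ler_pM.
by rewrite -[X in X <= _]mulr1 ler_pM // mulr_ege1 // lerDl sqr_ge0.
Qed.

Lemma exprS_gauss_le N (x : R) :
  (1 + x ^+ 2) ^+ N.+1 * gauss_fun x <= N.+1`!%:R * expR 1.
Proof.
set y := 1 + x ^+ 2.
have y0 : 0 <= y by rewrite addr_ge0 ?sqr_ge0.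
have F0 : 0 < N.+1`!%:R :> R by rewrite ltr0n fact_gt0.
have y_le : y ^+ N.+1 <= N.+1`!%:R * expR y.
  rewrite -[X in X <= _](mulVKf (lt0r_neq0 F0)) ler_pM2l // mulrC.
  by apply: le_trans (expR_ge1Dxn N y0); rewrite lerDr.
have -> : expR 1 = expR y * gauss_fun x by rewrite -expRD /y addrK.
by rewrite mulrA ler_wpM2r // gauss_fun_ge0.
Qed.

Lemma horner_gauss_le (p : {poly R}) :
  exists2 K, 0 <= K & forall x, `|p.[x]| * gauss_fun x <= K / (1 + x ^+ 2).
Proof.
have [C [N [C0 pC]]] := horner_bound p.
exists (C * (N.+1`!%:R * expR 1)) => [|x]; first by rewrite !mulr_ge0 ?expR_ge0.
have s0 : 0 < 1 + x ^+ 2 by rewrite ltr_pwDl // sqr_ge0.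
rewrite ler_pdivlMr // (le_trans _ (ler_wpM2l C0 (exprS_gauss_le N x))) //.
have -> : C * ((1 + x ^+ 2) ^+ N.+1 * gauss_fun x) =
    C * (1 + x ^+ 2) ^+ N * gauss_fun x * (1 + x ^+ 2) by rewrite exprSr; ring.
by rewrite !ler_wpM2r ?gauss_fun_ge0 ?(ltW s0).
Qed.

Lemma continuous_inv1Dsqr : continuous (fun x : R => (1 + x ^+ 2)^-1).
Proof.
move=> x; apply: (continuousV (s := fun y : R => 1 + y ^+ 2)).
  by rewrite gt_eqF // ltr_pwDl // sqr_ge0.
have -> : (fun y : R => 1 + y ^+ 2) = horner (1 + 'X ^+ 2 : {poly R}).
  by apply/funext => y; rewrite !hornerE.
exact: continuous_horner.
Qed.

Lemma integrable_inv1Dsqr : mu.-integrable setT (fun x : R => ((1 + x ^+ 2)^-1)%:E).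
Proof.
have pos x : 0 <= (1 + x ^+ 2)^-1 :> R by rewrite invr_ge0 addr_ge0 ?sqr_ge0.
apply/integrableP; split.
  by apply/measurable_EFinP; exact: continuous_measurable_fun continuous_inv1Dsqr.
under eq_integral => x _ do rewrite gee0_abs ?lee_fin //.
rewrite ge0_symfun_integralT //; last 2 first.
- exact: continuous_inv1Dsqr.
- by move=> x /=; rewrite sqrrN.
rewrite -set_itvcy (@ge0_continuous_FTC2y R _ atan 0 (pi / 2)) //.
- by rewrite atan0 -EFinB -EFinM ltry.
- exact: continuous_subspaceT continuous_inv1Dsqr.
- exact: cvgy_atan.
- by apply: cvg_at_right_filter; exact: continuous_atan.
- by move=> x _; rewrite derive1_atan.
Qed.

Lemma continuous_horner_gauss (p : {poly R}) : continuous (fun x => p.[x] * gauss_fun x).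
Proof.
by move=> x; apply: continuousM; [exact: continuous_horner|exact: continuous_gauss_fun].
Qed.

Lemma integrable_horner_gauss (p : {poly R}) :
  mu.-integrable setT (fun x => (p.[x] * gauss_fun x)%:E).
Proof.
have [K K0 pK] := horner_gauss_le p.
apply: (le_integrable _ _ _ (integrableZl measurableT K integrable_inv1Dsqr)) => //.
  by apply/measurable_EFinP; exact: continuous_measurable_fun (continuous_horner_gauss p).
move=> x _; rewrite /= lee_fin normrM (ger0_norm (gauss_fun_ge0 x)).
exact: le_trans (pK x) (ler_norm _).
Qed.

Lemma horner_gauss_cvg0 (p : {poly R}) (u : R^nat) :
  (forall n, n.+1%:R <= `|u n|) -> p.[u n] * gauss_fun (u n) @[n --> \oo] --> 0.
Proof.
move=> u_ge; have [K K0 pK] := horner_gauss_le p.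
have lim : harmonic n * K @[n --> \oo] --> (0 : R).
  by rewrite -(mul0r K); apply: cvgMr_tmp; exact: cvg_harmonic.
have limN : - (harmonic n * K) @[n --> \oo] --> (0 : R).
  by rewrite -oppr0; exact: cvgN.
apply: (squeeze_cvgr _ limN lim); apply: nearW => n.
rewrite -ler_norml normrM (ger0_norm (gauss_fun_ge0 _)) (le_trans (pK _)) //.
rewrite /harmonic /= mulrC ler_wpM2r // lef_pV2 ?posrE ?ltr_pwDl ?sqr_ge0 //.
have := u_ge n; rewrite -real_normK ?num_real // -natr1.
have := ler0n R n; set v := `|u n|; nra.
Qed.

Lemma is_derive_gauss_fun (x : R) : is_derive x 1 gauss_fun (- (x *+ 2) * gauss_fun x).
Proof.
have sqr' : is_derive x 1 (fun y : R => - y ^+ 2) (- (x *+ 2)).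
  by apply: is_derive_eq; rewrite (_ : x%:A = x) //; exact: mulr1.
rewrite mulrC; exact: is_derive1_comp (is_derive_expR _) sqr'.
Qed.

Definition raise (q : {poly R}) : {poly R} := 'X * q *+ 2 - q^`().

Lemma is_derive_horner_gauss (q : {poly R}) (x : R) :
  is_derive x 1 (fun y => - (q.[y] * gauss_fun y)) ((raise q).[x] * gauss_fun x).
Proof.
have dqg : is_derive x 1 (horner q * gauss_fun)
    (q.[x] *: (- (x *+ 2) * gauss_fun x) + gauss_fun x *: q^`().[x]).
  by apply: is_deriveM; exact: is_derive_gauss_fun.
have := is_deriveN dqg.
rewrite (_ : - (horner q * gauss_fun) = (fun y => - (q.[y] * gauss_fun y))) //.
move=> ?; apply: is_derive_eq.
by rewrite /raise !hornerE /GRing.scale /=; ring.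
Qed.

Lemma integral_itv_raise (q : {poly R}) (a b : R) : a < b ->
  (\int[mu]_(x in `[a, b]) ((raise q).[x] * gauss_fun x)%:E =
   (q.[a] * gauss_fun a - q.[b] * gauss_fun b)%:E)%E.
Proof.
move=> ab; pose F y := - (q.[y] * gauss_fun y).
have cF : continuous F.
  move=> y; apply: (continuousN (f := fun y => q.[y] * gauss_fun y)).
  exact: continuous_horner_gauss.
rewrite (_ : _ - _ = F b - F a); last by rewrite /F opprK addrC.
rewrite EFinB; apply: continuous_FTC2 ab _ _ _.
- exact: continuous_subspaceT (continuous_horner_gauss _).
- split.
  + by move=> x _; apply: ex_derive; exact: is_derive_horner_gauss.
  + by apply: cvg_at_right_filter; exact: cF.
  + by apply: cvg_at_left_filter; exact: cF.
- by move=> x _; have := is_derive_horner_gauss q x; rewrite derive1E => ?; rewrite derive_val.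
Qed.

Lemma integral_ray_raise (q : {poly R}) (a : R) :
  (\int[mu]_(x in `]a, +oo[) ((raise q).[x] * gauss_fun x)%:E =
   (q.[a] * gauss_fun a)%:E)%E.
Proof.
pose b n : R := `|a| + n.+1%:R.
have ab n : a < b n by rewrite (le_lt_trans (ler_norm a)) // ltrDl ltr0n.
have sub n : `]a, b n] `<=` `]a, +oo[.
  by move=> x /=; rewrite !in_itv /= => /andP[-> _].
have exhaust x : `]a, +oo[ x -> \forall n \near \oo, `]a, b n] x.
  rewrite /= in_itv /= andbT => ax.
  apply: filterS (nbhs_infty_gtr (x - `|a|)) => n.
  rewrite in_itv /= ax ltrBlDl => /ltW /le_trans; apply.
  by rewrite /b lerD2l ler_nat.
have Ib n : (\int[mu]_(x in `]a, b n]) ((raise q).[x] * gauss_fun x)%:E =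
    (q.[a] * gauss_fun a - q.[b n] * gauss_fun (b n))%:E)%E.
  rewrite integral_itv_obnd_cbnd ?integral_itv_raise //.
  apply: measurable_funTS; apply/measurable_EFinP.
  exact: continuous_measurable_fun (continuous_horner_gauss _).
apply: (cvg_unique _ (integral_cvg_exhaustion mu _ _ _ (measurable_itv _)
  (fun n => measurable_itv _) sub exhaust
  (integrableS measurableT _ _ (integrable_horner_gauss (raise q))))) => //=.
under eq_fun do rewrite Ib; apply: cvg_EFin; first exact: nearW.
rewrite -[X in _ --> X]subr0; apply: cvgB; first exact: cvg_cst.
by apply: horner_gauss_cvg0 => n; rewrite ger0_norm ?addr_ge0 // lerDr.
Qed.

Lemma integral_raise (q : {poly R}) :
  (\int[mu]_x ((raise q).[x] * gauss_fun x)%:E = 0)%E.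
Proof.
pose b n : R := - n.+1%:R.
have exhaust x : [set: R] x -> \forall n \near \oo, `]b n, +oo[ x.
  move=> _; apply: filterS (nbhs_infty_gtr (- x)) => n xn.
  by rewrite /= in_itv /= andbT ltrNl (lt_trans xn) ?ltr_nat.
apply: (cvg_unique _ (integral_cvg_exhaustion mu _ _ _ measurableT
  (fun n => measurable_itv _) (fun n => subsetT _) exhaust
  (integrable_horner_gauss (raise q)))) => //=.
under eq_fun do rewrite integral_ray_raise; apply: cvg_EFin; first exact: nearW.
by apply: horner_gauss_cvg0 => n; rewrite normrN ger0_norm.
Qed.

End gauss_polynomial.

Section step_weight.
Context {R : realType} (m : nat) (t om : nat -> R).
Local Notation mu := (@lebesgue_measure R).
Local Open Scope classical_set_scope.

Definition step (x : R) : R := om 0%N + \sum_(1 <= k < m.+1) om k * theta (x - t k).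

Lemma theta_patch (f : R -> R) (a x : R) :
  (f x * theta (x - a))%:E = ((EFin \o f) \_ `]a, +oo[) x.
Proof.
rewrite patchE /theta subr_gt0 /= mem_setE in_itv /= andbT.
by case: ifP => _; rewrite ?mulr1 ?mulr0.
Qed.

Lemma mul_stepE (f : R -> R) (x : R) :
  (f x * step x)%:E = ((om 0%N)%:E * (f x)%:E +
    \sum_(1 <= k < m.+1) (om k)%:E * ((EFin \o f) \_ `]t k, +oo[) x)%E.
Proof.
rewrite /step mulrDr big_distrr /= EFinD -sumEFin; congr (_ + _)%E.
  by rewrite mulrC EFinM.
by apply: eq_bigr => k _; rewrite -theta_patch -EFinM mulrCA.
Qed.

Variable f : R -> R.
Hypothesis intf : mu.-integrable setT (EFin \o f).

Let int_patch (a : R) : mu.-integrable setT ((EFin \o f) \_ `]a, +oo[).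
Proof. by rewrite -integrable_mkcond //; exact: integrableS intf. Qed.

Lemma integrable_mul_step : mu.-integrable setT (fun x => (f x * step x)%:E).
Proof.
under eq_fun do rewrite mul_stepE.
apply: integrableD => //; first exact: integrableZl.
by apply: (integrable_sum measurableT) => k _; exact: integrableZl.
Qed.

Lemma integral_mul_step :
  (\int[mu]_x (f x * step x)%:E = (om 0%N)%:E * \int[mu]_x (f x)%:E +
    \sum_(1 <= k < m.+1) (om k)%:E * \int[mu]_(x in `]t k, +oo[) (f x)%:E)%E.
Proof.
under eq_integral do rewrite mul_stepE.
rewrite integralD //; first last.
- by apply: (integrable_sum measurableT) => k _; exact: integrableZl.
- exact: integrableZl.
rewrite integralZl // integral_sum //; last by move=> k; exact: integrableZl.
congr (_ + _)%E; apply: eq_bigr => k _.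
by rewrite integralZl // [in RHS]integral_mkcond.
Qed.

End step_weight.

Lemma size_sub_leq_coef (R : nzRingType) (p q : {poly R}) n :
  (size p <= n.+1)%N -> (size q <= n.+1)%N -> p`_n = q`_n -> (size (p - q)%R <= n)%N.
Proof.
move=> sp sq pq; apply/leq_sizeP => j; rewrite leq_eqVlt coefB => /predU1P[<-|nj].
  by rewrite pq subrr.
by rewrite (leq_sizeP _ _ sp) // (leq_sizeP _ _ sq) // subrr.
Qed.

Section weighted_integral.
Context {R : realType} (m : nat) (t om : nat -> R).
Local Notation mu := (@lebesgue_measure R).
Local Notation w := (weight m t om).

Lemma horner_weightE (p : {poly R}) (x : R) :
  p.[x] * w x = (p.[x] * gauss_fun x) * step m t om x.
Proof. by rewrite mulrA. Qed.

Lemma integrable_horner_weight (p : {poly R}) :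
  mu.-integrable setT (fun x => (p.[x] * w x)%:E).
Proof.
under eq_fun do rewrite horner_weightE.
exact/integrable_mul_step/integrable_horner_gauss.
Qed.

Definition wint (p : {poly R}) : R := fine (\int[mu]_x (p.[x] * w x)%:E).

Lemma wintE (p : {poly R}) : (\int[mu]_x (p.[x] * w x)%:E)%E = (wint p)%:E.
Proof. by rewrite fineK // integrable_fin_num // integrable_horner_weight. Qed.

Lemma wintD (p q : {poly R}) : wint (p + q) = wint p + wint q.
Proof.
apply: EFin_inj; rewrite EFinD -!wintE.
under eq_integral do rewrite hornerD mulrDl EFinD.
by rewrite integralD //; exact: integrable_horner_weight.
Qed.

Lemma wintZ (c : R) (p : {poly R}) : wint (c *: p) = c * wint p.
Proof.
apply: EFin_inj; rewrite EFinM -!wintE.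
under eq_integral do rewrite hornerZ -mulrA EFinM.
by rewrite integralZl //; exact: integrable_horner_weight.
Qed.

Lemma wint0 : wint 0 = 0.
Proof. by rewrite -(scale0r 0) wintZ mul0r. Qed.

Lemma wintB (p q : {poly R}) : wint (p - q) = wint p - wint q.
Proof. by rewrite -scaleN1r wintD wintZ mulN1r. Qed.

Lemma wint_raise (q : {poly R}) :
  wint (raise q) = \sum_(1 <= k < m.+1) om k * (q.[t k] * gauss_fun (t k)).
Proof.
apply: EFin_inj; rewrite -wintE -sumEFin.
under eq_integral do rewrite horner_weightE.
rewrite integral_mul_step ?integral_raise ?mule0 ?add0e; last exact: integrable_horner_gauss.
by apply: eq_bigr => k _; rewrite integral_ray_raise.
Qed.

Lemma wint_raiseM (p q : {poly R}) : wint (raise (p * q)) =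
  2 * wint (p * ('X * q)) - wint (p^`() * q) - wint (p * q^`()).
Proof. by rewrite /raise derivM wintB mulr2n wintD wintD mulrCA; lra. Qed.

End weighted_integral.

Section orthogonal_polynomials.
Context {R : realType} (m : nat) (t om : nat -> R) (P : nat -> {poly R}) (h : nat -> R).
Local Notation wint := (wint m t om).
Hypothesis P_monic : forall n, P n \is monic.
Hypothesis size_P : forall n, size (P n) = n.+1.
Hypothesis wint_PP : forall j k, wint (P j * P k) = if j == k then h k else 0.

Let coef_P n : (P n)`_n = 1.
Proof. by have /monicP := P_monic n; rewrite lead_coefE size_P. Qed.

Let size_deriv_P n : (size (P n)^`() <= n)%N.
Proof. by rewrite -ltnS -(size_P n) lt_size_deriv // -size_poly_gt0 size_P. Qed.

Let mulP_decomp n s (r : {poly R}) :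
  P n * r = P n * (r - r`_s *: P s) + r`_s *: (P n * P s).
Proof. by rewrite scalerAr -mulrDr subrK. Qed.

Let size_sub_coef_P n (r : {poly R}) :
  (size r <= n.+1)%N -> (size (r - r`_n *: P n)%R <= n)%N.
Proof.
move=> rn; apply: size_sub_leq_coef; rewrite ?coefZ ?coef_P ?mulr1 //.
by rewrite (leq_trans (size_scale_leq _ _)) ?size_P.
Qed.

Lemma wint_P_orth n (r : {poly R}) : (size r <= n)%N -> wint (P n * r) = 0.
Proof.
move=> rn; suff orth s : (s <= n)%N ->
    forall q : {poly R}, (size q <= s)%N -> wint (P n * q) = 0 by exact: orth rn.
elim: s {r rn} => [_ r|s IHs sn r rs].
  by rewrite leqn0 size_poly_eq0 => /eqP ->; rewrite mulr0 wint0.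
rewrite (mulP_decomp n s) wintD (IHs (ltnW sn)) ?size_sub_coef_P //.
by rewrite wintZ wint_PP gtn_eqF // mulr0 add0r.
Qed.

Lemma wint_P_coef n (r : {poly R}) : (size r <= n.+1)%N -> wint (P n * r) = r`_n * h n.
Proof.
move=> rn; rewrite (mulP_decomp n n) wintD wint_P_orth ?size_sub_coef_P //.
by rewrite wintZ wint_PP eqxx add0r.
Qed.

Hypothesis h_gt0 : forall n, 0 < h n.

Lemma alpha_formula (alpha : nat -> R) n :
  'X * P n = P n.+1 + alpha n *: P n + beta_of h n *: (if n is n'.+1 then P n' else 0) ->
  alpha n = 2^-1 * \sum_(1 <= k < m.+1) Rnk t om P h n k.
Proof.
move=> rec.
have wint_XPP : wint (P n * ('X * P n)) = alpha n * h n.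
  rewrite rec !mulrDr !wintD -!scalerAr !wintZ !wint_PP eqxx ltn_eqF // add0r.
  case: n {rec} => [|n] /=; first by rewrite mulr0 wint0 mulr0 addr0.
  by rewrite wint_PP gtn_eqF // mulr0 addr0.
have sumR : \sum_(1 <= k < m.+1) Rnk t om P h n k =
    (\sum_(1 <= k < m.+1) om k * ((P n * P n).[t k] * gauss_fun (t k))) / h n.
  by rewrite mulr_suml; apply: eq_bigr => k _; rewrite /Rnk hornerM /gauss_fun; ring.
rewrite sumR -wint_raise wint_raiseM wint_XPP [(P n)^`() * _]mulrC wint_P_orth //.
by field; exact: lt0r_neq0.
Qed.

Lemma beta_formula n :
  beta_of h n = 2^-1 * (\sum_(1 <= k < m.+1) rnk t om P h n k + n%:R).
Proof.
case: n => [|n]; first by rewrite /= big1 ?add0r ?mulr0.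
have sumr : \sum_(1 <= k < m.+1) rnk t om P h n.+1 k =
    (\sum_(1 <= k < m.+1) om k * ((P n.+1 * P n).[t k] * gauss_fun (t k))) / h n.
  by rewrite mulr_suml; apply: eq_bigr => k _; rewrite /rnk hornerM /gauss_fun; ring.
have wint_XPP : wint (P n.+1 * ('X * P n)) = h n.+1.
  rewrite wint_P_coef ?coefXM ?coef_P ?mul1r //.
  by rewrite (leq_trans (size_mul_leq _ _)) // size_polyX size_P.
have wint_DPP : wint ((P n.+1)^`() * P n) = n.+1%:R * h n.
  by rewrite mulrC wint_P_coef ?coef_deriv ?coef_P // (leq_trans (size_deriv_P _)).
rewrite sumr -wint_raise wint_raiseM wint_XPP wint_DPP.
rewrite wint_P_orth ?(leq_trans (size_deriv_P _)) //=.
by field; exact: lt0r_neq0.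
Qed.

End orthogonal_polynomials.

Theorem lemma2p6 (R : realType) (m : nat) (t om : nat -> R)
  (P : nat -> {poly R}) (h alpha : nat -> R) :
  (1 <= m)%N ->
  (forall k : nat, (1 <= k)%N -> (k < m)%N -> t k < t k.+1) ->
  (forall l : nat, (l <= m)%N -> 0 <= \sum_(0 <= k < l.+1) om k) ->
  (exists x : R, weight m t om x != 0) ->
  (* P_n monic of degree n, orthogonal w.r.t. w with norms h_n > 0 *)
  (forall n : nat, P n \is monic /\ size (P n) = n.+1) ->
  (forall j k : nat,
     (\int[@lebesgue_measure R]_x ((P j).[x] * (P k).[x] * weight m t om x)%:E)%E
     = ((if j == k then h k else 0)%:E)%E) ->
  (forall k : nat, 0 < h k) ->
  (* three-term recurrence, with beta_n = h_n/h_{n-1}, beta_0 = 0, P_{-1} = 0 *)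
  (forall n : nat,
     'X * P n = P n.+1 + alpha n *: P n
                + beta_of h n *: (if n is n'.+1 then P n' else 0)) ->
  forall n : nat,
    alpha n = 2^-1 * \sum_(1 <= k < m.+1) Rnk t om P h n k /\
    beta_of h n = 2^-1 * (\sum_(1 <= k < m.+1) rnk t om P h n k + n%:R).
Proof.
(* The conditions on t, omega and w only ensure that P and h exist. *)
move=> _ _ _ _ PmP orth h_gt0 rec n.
have wint_PP j k : wint m t om (P j * P k) = if j == k then h k else 0.
  apply: EFin_inj; rewrite -wintE.
  under eq_integral do rewrite hornerM.
  by rewrite orth; case: ifP.
have P_monic k := (PmP k).1; have size_P k := (PmP k).2.
split; first exact: alpha_formula.
exact: beta_formula.
Qed.
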